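(* Let $G$ be a group, $n$ a positive integer, and let $\alpha_i:H_i\to H_i'$ for $i=1,\dots,r$ be isomorphisms between finite-index subgroups of $G$ such that the subindices of $H_i$ and of $H_i'$ in $G$ are at most $n$ for all $i$. Then every finite product of the classes $[\alpha_i]$ (and their inverses) in $\mathrm{Comm}(G)$ can be represented by an isomorphism $\beta:H\to H'$ where $H,H'$ are finite-index subgroups of $G$ whose subindices in $G$ are at most $n$.
   Context: For a finite-index subgroup $H\leqslant G$, the subindex of $H$ in $G$ is the minimal $n$ such that there is a chain of subgroups $H=G_0\leqslant G_1\leqslant\cdots\leqslant G_k=G$ with $[G_i:G_{i-1}]\le n$ for all $i$. The abstract commensurator $\mathrm{Comm}(G)$ is the group of equivalence classes $[\varphi]$ of isomorphisms between finite-index subgroups of $G$, two being equivalent if they agree on some finite-index subgroup on which both are defined; the product of $\alpha:G_1\to G_1'$ and $\beta:G_2\to G_2'$ is $\alpha\beta:\alpha^{-1}(G_1'\cap G_2)\to\beta(G_1'\cap G_2)$, and the inverse of $[\alpha]$ is $[\alpha^{-1}]$. *)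

From Stdlib Require Import List Arith.
Import ListNotations.

Record group := Group {
  carrier :> Type;
  mul : carrier -> carrier -> carrier;
  one : carrier;
  inv : carrier -> carrier;
  mulA : forall x y z, mul x (mul y z) = mul (mul x y) z;
  mul1g : forall x, mul one x = x;
  mulVg : forall x, mul (inv x) x = one
}.

Section Defs.
Variable G : group.

Definition subgroup (H : G -> Prop) : Prop :=
  H (one G) /\ (forall x y, H x -> H y -> H (mul G x y)) /\
  (forall x, H x -> H (inv G x)).

(* [K : H] <= n  (for H <= K): K is covered by at most n left cosets x H, x in K *)
Definition index_le (H K : G -> Prop) (n : nat) : Prop :=
  exists l : list G, length l <= n /\ (forall x, In x l -> K x) /\
    (forall y, K y -> exists x, In x l /\ H (mul G (inv G x) y)).

Definition finite_index (H : G -> Prop) : Prop :=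
  subgroup H /\ exists n, index_le H (fun _ => True) n.

Definition subindex_le (H : G -> Prop) (n : nat) : Prop :=
  exists (k : nat) (Gs : nat -> G -> Prop),
    Gs 0 = H /\ (forall x, Gs k x) /\
    (forall i, i <= k -> subgroup (Gs i)) /\
    (forall i, i < k -> (forall x, Gs i x -> Gs (S i) x) /\
                        index_le (Gs i) (Gs (S i)) n).

Record piso := PIso {
  pdom : G -> Prop;
  pcod : G -> Prop;
  pfun : G -> G;
  pinv : G -> G
}.

Definition is_iso (a : piso) : Prop :=
  subgroup (pdom a) /\ subgroup (pcod a) /\
  (forall x, pdom a x -> pcod a (pfun a x)) /\
  (forall y, pcod a y -> pdom a (pinv a y)) /\
  (forall x, pdom a x -> pinv a (pfun a x) = x) /\
  (forall y, pcod a y -> pfun a (pinv a y) = y) /\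
  (forall x y, pdom a x -> pdom a y ->
     pfun a (mul G x y) = mul G (pfun a x) (pfun a y)).

(* isomorphism between finite-index subgroups: represents an element of Comm(G) *)
Definition comm_rep (a : piso) : Prop :=
  is_iso a /\ finite_index (pdom a) /\ finite_index (pcod a).

(* a letter (i, true) stands for [alpha_i], (i, false) for [alpha_i]^-1 = [alpha_i^-1] *)
Definition letter (a : piso) (b : bool) : (G -> Prop) * (G -> G) :=
  if b then (pdom a, pfun a) else (pcod a, pinv a).

(* the composite partial map of a word, following the product rule of Comm(G):
   alpha beta : alpha^-1(G1' :&: G2) -> beta(G1' :&: G2), x |-> beta (alpha x).
   The empty word is the identity of G. *)
Fixpoint word_map (alpha : nat -> piso) (w : list (nat * bool))
  : (G -> Prop) * (G -> G) :=
  match w with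
  | [] => (fun _ => True, fun x => x)
  | (i, b) :: w' =>
      let (D1, F1) := letter (alpha i) b in
      let (D2, F2) := word_map alpha w' in
      (fun x => D1 x /\ D2 (F1 x), fun x => F2 (F1 x))
  end.

(* beta represents the same class of Comm(G) as the partial map (D, F):
   they agree on some finite-index subgroup on which both are defined *)
Definition represents (beta : piso) (DF : (G -> Prop) * (G -> G)) : Prop :=
  exists K : G -> Prop, finite_index K /\
    (forall x, K x -> pdom beta x /\ fst DF x) /\
    (forall x, K x -> pfun beta x = snd DF x).

End Defs.

Arguments PIso {G}.

(* Call an isomorphism between subgroups of G bounded when its domain and codomain both have
   subindex at most n.  The inverse of a bounded isomorphism is bounded, and so is the composite
   a;b, whose domain is a^-1(cod a ∩ dom b): pulling a chain dom b = K_0 <= ... <= K_k = G back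
   along a, after intersecting with cod a, gives a chain from the domain of a;b up to dom a in
   which every step still has index at most n (intersecting with a subgroup and transporting
   along an isomorphism cannot increase an index); it is then continued by the chain of dom a.
   Hence every word in the alpha_i and their inverses is realised by a bounded isomorphism,
   and its domain, of finite index, witnesses that it represents the product in Comm(G). *)

From Stdlib Require Import List Arith Lia Classical FunctionalExtensionality PropExtensionality.
Import ListNotations.

Lemma choose_witnesses {A B : Type} (P : A -> B -> Prop) (l : list A) :
  exists l' : list B, length l' <= length l /\
    (forall z, In z l' -> exists x, In x l /\ P x z) /\
    (forall x, In x l -> (exists z, P x z) -> exists z, In z l' /\ P x z).
Proof.
  induction l as [|a l [l' [Hlen [Hsound Hcomplete]]]].
  - exists []; simpl; repeat split; intros; try contradiction; lia.
  - destruct (classic (exists z, P a z)) as [[z Hz]|Hnone].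
    + exists (z :: l'); simpl; split; [lia|split].
      * intros z' [<-|Hz']; [exists a; auto|].
        destruct (Hsound z' Hz') as [x [? ?]]; exists x; auto.
      * intros x [<-|Hx] Hex; [exists z; auto|].
        destruct (Hcomplete x Hx Hex) as [z' [? ?]]; exists z'; auto.
    + exists l'; simpl; split; [lia|split].
      * intros z' Hz'; destruct (Hsound z' Hz') as [x [? ?]]; exists x; auto.
      * intros x [<-|Hx] Hex; [contradiction|auto].
Qed.

Section Group.
Variable G : group.

Local Notation "x ⋅ y" := (mul G x y) (at level 40, left associativity).
Local Notation "x ⁻¹" := (inv G x) (at level 3, format "x ⁻¹").
Local Notation "1" := (one G).

Lemma mulgV x : x ⋅ x⁻¹ = 1.
Proof.
  rewrite <- (mul1g G (x ⋅ x⁻¹)), <- (mulVg G x⁻¹) at 1.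
  rewrite <- mulA, (mulA G x⁻¹ x x⁻¹), mulVg, mul1g, mulVg; reflexivity.
Qed.

Lemma mulg1 x : x ⋅ 1 = x.
Proof. rewrite <- (mulVg G x), mulA, mulgV, mul1g; reflexivity. Qed.

Lemma invg_unique x y : x ⋅ y = 1 -> y = x⁻¹.
Proof. intro Hxy; rewrite <- (mul1g G y), <- (mulVg G x), <- mulA, Hxy, mulg1; reflexivity. Qed.

Lemma invgK x : x⁻¹⁻¹ = x.
Proof. symmetry; apply invg_unique, mulVg. Qed.

Lemma invgM x y : (x ⋅ y)⁻¹ = y⁻¹ ⋅ x⁻¹.
Proof.
  symmetry; apply invg_unique.
  rewrite <- mulA, (mulA G y y⁻¹), mulgV, mul1g, mulgV; reflexivity.
Qed.

Lemma mulg_cancel_l x y z : x ⋅ y = x ⋅ z -> y = z.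
Proof.
  intro Hxyz.
  rewrite <- (mul1g G y), <- (mulVg G x), <- mulA, Hxyz, mulA, mulVg, mul1g; reflexivity.
Qed.

Lemma subgroup_full : subgroup G (fun _ => True).
Proof. repeat split. Qed.

Lemma subgroupI (A B : G -> Prop) :
  subgroup G A -> subgroup G B -> subgroup G (fun x => A x /\ B x).
Proof. intros [A1 [AM AV]] [B1 [BM BV]]; repeat split; intuition. Qed.

Lemma index_le_trans (A B C : G -> Prop) p q :
  (forall x, B x -> C x) -> (forall x y, C x -> C y -> C (x ⋅ y)) ->
  index_le G A B p -> index_le G B C q -> index_le G A C (q * p).
Proof.
  intros HBC HCM [lA [HlA [HinA HcovA]]] [lB [HlB [HinB HcovB]]].
  exists (flat_map (fun y => map (mul G y) lA) lB); split; [|split].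
  - assert (Hlen : forall l, length (flat_map (fun y => map (mul G y) lA) l)
                             = length l * length lA).
    { induction l; simpl; [|rewrite length_app, length_map]; lia. }
    rewrite Hlen; apply Nat.mul_le_mono; assumption.
  - intros z Hz; apply in_flat_map in Hz as [y [Hy Hz]].
    apply in_map_iff in Hz as [x [<- Hx]]; auto.
  - intros z Hz; destruct (HcovB z Hz) as [y [Hy Hyz]].
    destruct (HcovA _ Hyz) as [x [Hx Hxyz]].
    exists (y ⋅ x); split.
    + apply in_flat_map; exists y; split; [|apply in_map]; assumption.
    + rewrite invgM, <- mulA; exact Hxyz.
Qed.

(* Keep one representative of each coset of A that meets C; a coset of C ∩ A inside C ∩ B is
   the trace on C of a coset of A, so these representatives cover C ∩ B. *)
Lemma index_le_setI (C A B : G -> Prop) k :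
  subgroup G C -> subgroup G A -> index_le G A B k ->
  index_le G (fun x => C x /\ A x) (fun x => C x /\ B x) k.
Proof.
  intros [C1 [CM CV]] [A1 [AM AV]] [l [Hl [_ Hcov]]].
  destruct (choose_witnesses (fun x z => (C z /\ B z) /\ A (x⁻¹ ⋅ z)) l)
    as [l' [Hl' [Hsound Hcomplete]]].
  exists l'; split; [lia|split].
  - intros z Hz; destruct (Hsound z Hz) as [x [_ [HCBz _]]]; exact HCBz.
  - intros y [HCy HBy]; destruct (Hcov y HBy) as [x [Hx HAxy]].
    destruct (Hcomplete x Hx) as [z [Hz [[HCz HBz] HAxz]]]; [exists y; auto|].
    exists z; split; [exact Hz|split]; [auto|].
    replace (z⁻¹ ⋅ y) with ((x⁻¹ ⋅ z)⁻¹ ⋅ (x⁻¹ ⋅ y)); [auto|].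
    rewrite invgM, invgK, <- mulA, (mulA G x x⁻¹ y), mulgV, mul1g; reflexivity.
Qed.

Definition preim (a : piso G) (P : G -> Prop) : G -> Prop :=
  fun x => pdom G a x /\ P (pfun G a x).

Definition flip (a : piso G) : piso G := PIso (pcod G a) (pdom G a) (pinv G a) (pfun G a).

Definition comp (a b : piso G) : piso G :=
  PIso (preim a (fun z => pcod G a z /\ pdom G b z))
       (preim (flip b) (fun z => pdom G b z /\ pcod G a z))
       (fun x => pfun G b (pfun G a x)) (fun y => pinv G a (pinv G b y)).

Definition id_iso : piso G := PIso (fun _ => True) (fun _ => True) (fun x => x) (fun x => x).

Lemma id_is_iso : is_iso G id_iso.
Proof. pose proof subgroup_full; unfold is_iso; simpl; repeat split; auto. Qed.

Section Isomorphism.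
Variable a : piso G.
Hypothesis Ha : is_iso G a.

Lemma iso_one : pfun G a 1 = 1.
Proof.
  destruct Ha as [[D1 _] [_ [_ [_ [_ [_ Hmorph]]]]]].
  apply (mulg_cancel_l (pfun G a 1)).
  rewrite mulg1, <- Hmorph, mul1g by assumption; reflexivity.
Qed.

Lemma iso_inv x : pdom G a x -> pfun G a x⁻¹ = (pfun G a x)⁻¹.
Proof.
  destruct Ha as [[_ [_ DV]] [_ [_ [_ [_ [_ Hmorph]]]]]]; intro Hx.
  apply invg_unique; rewrite <- Hmorph, mulgV by auto; exact iso_one.
Qed.

Lemma preim_subgroup P : subgroup G P -> subgroup G (preim a P).
Proof.
  destruct Ha as [[D1 [DM DV]] [_ [_ [_ [_ [_ Hmorph]]]]]]; intros [P1 [PM PV]].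
  unfold preim; split; [|split].
  - rewrite iso_one; auto.
  - intros x y [Hx Px] [Hy Py]; rewrite Hmorph; auto.
  - intros x [Hx Px]; rewrite iso_inv; auto.
Qed.

Lemma index_le_preim A B k :
  (forall x, B x -> pcod G a x) -> index_le G A B k -> index_le G (preim a A) (preim a B) k.
Proof.
  destruct Ha as [[_ [DM DV]] [_ [_ [Hinv_cod [_ [Hfun_inv Hmorph]]]]]].
  intros HBcod [l [Hl [HinB Hcov]]].
  exists (map (pinv G a) l); split; [rewrite length_map; assumption|split].
  - intros z Hz; apply in_map_iff in Hz as [x [<- Hx]].
    unfold preim; rewrite Hfun_inv by auto; split; auto.
  - intros y [Hy HBy]; destruct (Hcov _ HBy) as [x [Hx HAxy]].
    exists (pinv G a x); split; [apply in_map; assumption|].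
    assert (Hdom_x : pdom G a (pinv G a x)) by auto.
    unfold preim; rewrite Hmorph, iso_inv, Hfun_inv by auto; split; auto.
Qed.

Lemma flip_iso : is_iso G (flip a).
Proof.
  destruct Ha as [HD [HC [Hfun_cod [Hinv_dom [Hinv_fun [Hfun_inv Hmorph]]]]]].
  pose proof HD as [_ [DM _]].
  unfold is_iso; simpl; do 6 (split; [assumption|]).
  intros x y Hx Hy.
  rewrite <- (Hfun_inv x Hx), <- (Hfun_inv y Hy) at 1.
  rewrite <- Hmorph by auto; apply Hinv_fun; auto.
Qed.

End Isomorphism.

Lemma comp_iso a b : is_iso G a -> is_iso G b -> is_iso G (comp a b).
Proof.
  intros Ha Hb.
  pose proof Ha as [HDa [HCa [Hfun_a [Hinv_a [Hinv_fun_a [Hfun_inv_a Hmorph_a]]]]]].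
  pose proof Hb as [HDb [HCb [Hfun_b [Hinv_b [Hinv_fun_b [Hfun_inv_b Hmorph_b]]]]]].
  split; [|split].
  - apply preim_subgroup, subgroupI; assumption.
  - apply preim_subgroup; [apply flip_iso; assumption|apply subgroupI; assumption].
  - unfold comp, preim; simpl; split; [|split; [|split; [|split]]].
    + intros x [Hx [Hcod_x Hdom_x]]; rewrite Hinv_fun_b; auto.
    + intros y [Hy [Hdom_y Hcod_y]]; rewrite Hfun_inv_a; auto.
    + intros x [Hx [Hcod_x Hdom_x]]; rewrite Hinv_fun_b, Hinv_fun_a; auto.
    + intros y [Hy [Hdom_y Hcod_y]]; rewrite Hfun_inv_a, Hfun_inv_b; auto.
    + intros x y [Hx [Hcod_x Hdom_x]] [Hy [Hcod_y Hdom_y]].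
      rewrite Hmorph_a, Hmorph_b; auto.
Qed.

(* The chains of subindex_le in inductive form, so that they can be pulled back by induction. *)
Inductive subchain (n : nat) : (G -> Prop) -> Prop :=
| subchain_full H : subgroup G H -> (forall x, H x) -> subchain n H
| subchain_step H K : subgroup G H -> (forall x, H x -> K x) -> index_le G H K n ->
    subchain n K -> subchain n H.

Lemma subchain_finite_index n H : subchain n H -> finite_index G H.
Proof.
  induction 1 as [H HH Hfull|H K HH HHK Hindex _ [HK [k Hk]]]; split; auto.
  - exists 1%nat, [1]; simpl; repeat split; auto.
    intros y _; exists 1; auto.
  - exists (k * n); apply index_le_trans with K; auto.
Qed.

Lemma subindex_le_subchain n H : subindex_le G H n -> subchain n H.
Proof.
  intros [k [Gs [<- [Hfull [Hsub Hsteps]]]]].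
  enough (Hfrom : forall d i, i + d = k -> subchain n (Gs i)) by (apply (Hfrom k 0); lia).
  induction d as [|d IH]; intros i Hid.
  - rewrite Nat.add_0_r in Hid; subst; apply subchain_full; auto.
  - destruct (Hsteps i ltac:(lia)) as [Hincl Hindex].
    apply subchain_step with (Gs (S i)); auto; [apply Hsub; lia|apply IH; lia].
Qed.

Lemma subchain_subindex_le n H : subchain n H -> subindex_le G H n.
Proof.
  induction 1 as [H HH Hfull|H K HH HHK Hindex _ [k [Gs [HK [Hfull [Hsub Hsteps]]]]]].
  - exists 0, (fun _ => H); repeat split; auto; lia.
  - exists (S k), (fun i => match i with 0 => H | S j => Gs j end).
    split; [reflexivity|split; [exact Hfull|split]].
    + intros [|i] Hi; [assumption|apply Hsub; lia].
    + intros [|i] Hi; [rewrite HK; auto|apply Hsteps; lia].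
Qed.

Lemma subchain_preim n a B : is_iso G a -> subchain n (pdom G a) -> subchain n B ->
  subchain n (preim a (fun z => pcod G a z /\ B z)).
Proof.
  intros Ha Hdom.
  pose proof Ha as [_ [HC [Hfun_cod _]]].
  induction 1 as [H HH Hfull|H K HH HHK Hindex _ IH].
  - replace (preim a _) with (pdom G a); [exact Hdom|].
    apply functional_extensionality; intro x; apply propositional_extensionality.
    unfold preim; intuition.
  - apply subchain_step with (preim a (fun z => pcod G a z /\ K z)); [| | |exact IH].
    + apply preim_subgroup, subgroupI; assumption.
    + unfold preim; intuition.
    + apply index_le_preim, index_le_setI; try tauto.
Qed.

Definition bounded_iso (n : nat) (a : piso G) : Prop :=
  is_iso G a /\ subchain n (pdom G a) /\ subchain n (pcod G a).

Lemma bounded_id_iso n : bounded_iso n id_iso.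
Proof.
  pose proof (subchain_full n _ subgroup_full (fun _ => I)).
  split; [exact id_is_iso|split; assumption].
Qed.

Lemma bounded_flip_iso n a : bounded_iso n a -> bounded_iso n (flip a).
Proof. intros [Ha [Hdom Hcod]]; split; [apply flip_iso|split]; assumption. Qed.

Lemma bounded_comp_iso n a b : bounded_iso n a -> bounded_iso n b -> bounded_iso n (comp a b).
Proof.
  intros [Ha [Hdom_a Hcod_a]] [Hb [Hdom_b Hcod_b]].
  split; [apply comp_iso; assumption|split].
  - apply subchain_preim; assumption.
  - apply (subchain_preim n (flip b)); [apply flip_iso|..]; assumption.
Qed.

Definition letter_iso (a : piso G) (b : bool) : piso G := if b then a else flip a.

Lemma letterE a b : letter G a b = (pdom G (letter_iso a b), pfun G (letter_iso a b)).
Proof. destruct b; reflexivity. Qed.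

Lemma word_map_bounded_iso n (alpha : nat -> piso G) (w : list (nat * bool)) :
  (forall ib, In ib w -> bounded_iso n (alpha (fst ib))) ->
  exists beta, bounded_iso n beta /\
    forall x, pdom G beta x -> fst (word_map G alpha w) x /\
                               pfun G beta x = snd (word_map G alpha w) x.
Proof.
  induction w as [|[i b] w IH]; intros Hletters.
  - exists id_iso; split; [apply bounded_id_iso|simpl; auto].
  - destruct IH as [beta [Hbeta Hagree]]; [intros ib Hib; apply Hletters; right; exact Hib|].
    assert (Hi : bounded_iso n (alpha i)) by (apply (Hletters (i, b)); left; reflexivity).
    exists (comp (letter_iso (alpha i) b) beta); split.
    + apply bounded_comp_iso; [|exact Hbeta].
      destruct b; [|apply bounded_flip_iso]; exact Hi.
    + simpl; rewrite letterE; destruct (word_map G alpha w) as [D F].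
      unfold preim; simpl in *; intros x [Hx [_ Hbx]].
      destruct (Hagree _ Hbx) as [HD HF]; auto.
Qed.

End Group.

Theorem lemma2p5 (G : group) (n r : nat) (alpha : nat -> piso G) :
  0 < n ->
  (forall i, i < r ->
     comm_rep G (alpha i) /\
     subindex_le G (pdom G (alpha i)) n /\ subindex_le G (pcod G (alpha i)) n) ->
  forall w : list (nat * bool),
    (forall ib, In ib w -> fst ib < r) ->
    exists beta : piso G,
      comm_rep G beta /\
      subindex_le G (pdom G beta) n /\ subindex_le G (pcod G beta) n /\
      represents G beta (word_map G alpha w).
Proof.
  intros _ Halpha w Hw.
  destruct (word_map_bounded_iso G n alpha w) as [beta [[Hbeta [Hdom Hcod]] Hagree]].
  { intros ib Hib; destruct (Halpha _ (Hw ib Hib)) as [[Hiso _] [Hdom Hcod]].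
    split; [exact Hiso|split; apply subindex_le_subchain; assumption]. }
  exists beta; split; [|split; [|split]].
  - split; [exact Hbeta|split; apply (subchain_finite_index G n); assumption].
  - apply subchain_subindex_le; exact Hdom.
  - apply subchain_subindex_le; exact Hcod.
  - exists (pdom G beta); split; [apply (subchain_finite_index G n); exact Hdom|].
    split; intros x Hx; [split; [exact Hx|]|]; apply Hagree; exact Hx.
Qed.
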